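(* If $R$ is a prime right almost perfect ring, then $R$ is $h$-local.
   Context: Rings are associative with identity $1\neq 0$. A ring $R$ is called right almost perfect if $R/I$ is a right perfect ring for every two-sided ideal $I$ of $R$ with $I\neq 0$ and $I\neq R$. A ring is semilocal if $R/J(R)$ is semisimple artinian, where $J(R)$ is the Jacobson radical. A (prime) ring $R$ is called $h$-local if: (1) for every non-zero proper two-sided ideal $I$ of $R$, the factor ring $R/I$ is semilocal; and (2) every non-zero prime two-sided ideal of $R$ is contained in only one maximal two-sided ideal of $R$. *)

From HB Require Import structures.
From mathcomp Require Import all_boot all_order all_algebra.
Set Implicit Arguments. Unset Strict Implicit. Unset Printing Implicit Defensive.
Import GRing.Theory.
Local Open Scope ring_scope.

Section RingDefs.
Variable R : nzRingType.

Definition subset_of (A B : R -> Prop) := forall x, A x -> B x.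
Definition same_set (A B : R -> Prop) := forall x, A x <-> B x.

Definition is_addsub (A : R -> Prop) :=
  A 0 /\ (forall x y, A x -> A y -> A (x - y)).

Definition is_right_ideal (A : R -> Prop) :=
  is_addsub A /\ (forall x r, A x -> A (x * r)).

Definition is_ideal (I : R -> Prop) :=
  is_addsub I /\ (forall r x, I x -> I (r * x)) /\ (forall x r, I x -> I (x * r)).

Definition proper_set (I : R -> Prop) := exists x, ~ I x.
Definition nonzero_set (I : R -> Prop) := exists x, I x /\ x <> 0.

(* Maximal right ideals of R containing I (= maximal right ideals of R/I). *)
Definition max_right_ideal_over (I M : R -> Prop) :=
  is_right_ideal M /\ subset_of I M /\ proper_set M /\
  (forall N, is_right_ideal N -> subset_of M N ->
     same_set N M \/ (forall x, N x)).

(* Preimage in R of the Jacobson radical J(R/I):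
   intersection of all maximal right ideals of R/I. *)
Definition jac_mod (I : R -> Prop) : R -> Prop :=
  fun x => forall M, max_right_ideal_over I M -> M x.

(* R/K is a semisimple (artinian) ring: every right ideal of R/K is a
   direct summand of (R/K)_(R/K). Right ideals of R/K correspond to right
   ideals of R containing K. *)
Definition semisimple_mod (K : R -> Prop) :=
  forall A, is_right_ideal A -> subset_of K A ->
    exists B, is_right_ideal B /\ subset_of K B /\
      (forall x, exists a b, A a /\ B b /\ x = a + b) /\
      (forall x, A x -> B x -> K x).

(* R/I is semilocal: (R/I)/J(R/I) is semisimple artinian. *)
Definition semilocal_mod (I : R -> Prop) := semisimple_mod (jac_mod I).

Fixpoint rprod (a : nat -> R) (n : nat) : R :=
  match n with
  | 0 => a 0%N
  | n'.+1 => a n * rprod a n'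
  end.

Definition right_T_nilpotent_mod (I J : R -> Prop) :=
  forall a : nat -> R, (forall n, J (a n)) -> exists n, I (rprod a n).

(* R/I is right perfect (Bass): R/I semilocal and J(R/I) right T-nilpotent. *)
Definition right_perfect_mod (I : R -> Prop) :=
  semilocal_mod I /\ right_T_nilpotent_mod I (jac_mod I).

Definition right_almost_perfect :=
  forall I, is_ideal I -> nonzero_set I -> proper_set I -> right_perfect_mod I.

Definition prime_ring :=
  forall a b : R, (forall r, a * r * b = 0) -> a = 0 \/ b = 0.

Definition prime_ideal (P : R -> Prop) :=
  is_ideal P /\ proper_set P /\
  (forall a b, (forall r, P (a * r * b)) -> P a \/ P b).

Definition maximal_ideal (M : R -> Prop) :=
  is_ideal M /\ proper_set M /\
  (forall N, is_ideal N -> subset_of M N -> same_set N M \/ (forall x, N x)).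

Definition h_local :=
  (forall I, is_ideal I -> nonzero_set I -> proper_set I -> semilocal_mod I) /\
  (forall P, prime_ideal P -> nonzero_set P ->
     exists M, maximal_ideal M /\ subset_of P M /\
       forall M', maximal_ideal M' -> subset_of P M' -> same_set M' M).

End RingDefs.

(** In a prime ideal [P], any [x] outside [P] can be multiplied on the right
    by elements of the form [r * p] with [p] outside [P] and stay outside [P];
    iterating this produces products [x r_n x ... x r_0 x] that never vanish
    modulo [P].  Hence a right T-nilpotent right ideal modulo [P], such as the
    Jacobson radical of a right perfect [R/P], lies in [P], so [R/P] is
    semisimple.  A semisimple prime ring is simple: if [N] is an ideal above
    [P] and [B] a complement of [N], then [B R N] lies in the radical, so [B]
    lies in [P] by primeness.  Thus every nonzero prime ideal of a right almost
    perfect ring is maximal, which gives both conditions of h-locality. *)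

From mathcomp Require Import all_boot all_order all_algebra.
From Stdlib Require Import Classical ClassicalEpsilon.
Set Implicit Arguments.
Unset Strict Implicit.
Import GRing.Theory.
Local Open Scope ring_scope.

Lemma addsubD (R : nzRingType) (A : R -> Prop) x y :
  is_addsub A -> A x -> A y -> A (x + y).
Proof.
move=> [A0 Asub] Ax Ay.
have -> : x + y = x - (0 - y) by rewrite sub0r opprK.
by apply: (Asub) => //; apply: (Asub).
Qed.

Lemma prime_ideal_sandwich (R : nzRingType) (P : R -> Prop) a b :
  prime_ideal P -> ~ P a -> ~ P b -> exists r, ~ P (a * r * b).
Proof.
move=> [_ [_ Pprime]] Pa Pb; apply: NNPP => Hall.
have abP : forall r, P (a * r * b).
  by move=> r; apply: NNPP => Pr; apply: Hall; exists r.
by case: (Pprime _ _ abP).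
Qed.

Lemma jac_mod_mulr (R : nzRingType) (I : R -> Prop) x r :
  jac_mod I x -> jac_mod I (x * r).
Proof. by move=> Jx M HM; case: (HM) => [[_ Mr] _]; apply: Mr; apply: Jx. Qed.

Section NonvanishingProducts.
Variables (R : nzRingType) (P : R -> Prop) (x : R).
Hypotheses (Pprime : prime_ideal P) (Px : ~ P x).

Definition sandwich (p : R) : R :=
  epsilon (inhabits 0) (fun r => ~ P (x * r * p)).

Lemma sandwichP p : ~ P p -> ~ P (x * sandwich p * p).
Proof.
move=> Pp; apply: (epsilon_spec (inhabits 0) (fun r => ~ P (x * r * p))).
exact: prime_ideal_sandwich.
Qed.

Fixpoint sandwich_chain (n : nat) : R :=
  if n is n'.+1 then x * sandwich (sandwich_chain n') * sandwich_chain n' else x.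

Definition sandwich_factor (n : nat) : R :=
  if n is n'.+1 then x * sandwich (sandwich_chain n') else x.

Lemma rprod_sandwich_factor n : rprod sandwich_factor n = sandwich_chain n.
Proof. by elim: n => [|n IH] //=; rewrite IH. Qed.

Lemma sandwich_chain_notin n : ~ P (sandwich_chain n).
Proof. by elim: n => [|n IH] //=; apply: sandwichP. Qed.

End NonvanishingProducts.

Lemma right_T_nilpotent_prime_sub (R : nzRingType) (P J : R -> Prop) :
  prime_ideal P -> (forall x r, J x -> J (x * r)) ->
  right_T_nilpotent_mod P J -> subset_of J P.
Proof.
move=> Pprime Jmulr Jnil x Jx; apply: NNPP => Px.
have [|n] := Jnil (sandwich_factor P x); first by case=> [|n] //=; apply: Jmulr.
by rewrite rprod_sandwich_factor; apply: sandwich_chain_notin.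
Qed.

Lemma semisimple_prime_maximal (R : nzRingType) (P K : R -> Prop) :
  prime_ideal P -> subset_of K P -> semisimple_mod K -> maximal_ideal P.
Proof.
move=> Pprime KP Kss; have [Pideal [Pproper Pmul]] := Pprime.
split=> //; split=> // N Nideal PN.
have [NP | [n [Nn Pn]]] : (forall y, N y -> P y) \/ exists n, N n /\ ~ P n.
  case: (classic (exists n, N n /\ ~ P n)) => [|noN]; [by right | left].
  by move=> y Ny; apply: NNPP => Py; apply: noN; exists y.
by left=> y; split; [apply: NP | apply: PN].
right; have [Nadd [Nmull Nmulr]] := Nideal.
have [|y /KP /PN //|B [[_ Bmulr] [_ [NB_sum NB_cap]]]] := Kss N; first by split.
have BP b : B b -> P b.
  move=> Bb; have bRnP r : P (b * r * n).
    by apply/KP/NB_cap; [apply: Nmull | rewrite -mulrA; apply: Bmulr].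
  by case: (Pmul _ _ bRnP).
by move=> y; have [a [b [Na [Bb ->]]]] := NB_sum y; apply: addsubD => //; apply/PN/BP.
Qed.

Lemma maximal_ideal_sub_eq (R : nzRingType) (M M' : R -> Prop) :
  maximal_ideal M -> maximal_ideal M' -> subset_of M M' -> same_set M' M.
Proof.
move=> [_ [_ Mmax]] [M'ideal [[z M'z] _]] MM'.
by case: (Mmax M' M'ideal MM') => // M'all; case: M'z.
Qed.

Theorem corollary3p4 (R : nzRingType) :
  prime_ring R -> right_almost_perfect R -> h_local R.
Proof.
move=> _ Rperfect; split=> [I Iideal Inz Iproper | P Pprime Pnz].
  by case: (Rperfect I Iideal Inz Iproper).
have [Pideal [Pproper _]] := Pprime.
have [Pss Pnil] := Rperfect P Pideal Pnz Pproper.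
have JP : subset_of (jac_mod P) P.
  exact: right_T_nilpotent_prime_sub Pprime (@jac_mod_mulr R P) Pnil.
have Pmax : maximal_ideal P := semisimple_prime_maximal Pprime JP Pss.
exists P; split=> //; split=> // M'; exact: maximal_ideal_sub_eq.
Qed.
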